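(* Let $p$ be the POP of length 4 defined by the relations $1>2$, $1>3$ and $4>3$; equivalently, avoiding $p$ means simultaneously avoiding the patterns $4312, 4213, 3214, 4123, 3124$. Let $a(n)=|S_n(p)|$. Then $a(0)=a(1)=1$, and for $n\geq 2$, $a(n)=4a(n-1)-3a(n-2)+1$, so that $$a(n)=\frac{3^n-2n+3}{4}\quad(n\geq 0).$$ Moreover, $$\sum_{n\geq 0}a(n)x^n=\frac{(1-2x)^2}{(1-3x)(1-x)^2}.$$
   Context: An $n$-permutation is a word $\pi=\pi_1\cdots\pi_n$ containing each of $1,\ldots,n$ exactly once; $S_n$ is the set of $n$-permutations ($S_0$ consists of the empty permutation). A partially ordered pattern (POP) $p$ of length $k$ is a partial order on the label set $\{1,\ldots,k\}$; it is described by a set of generating relations, where a relation $x>y$ means that in an occurrence the entry in the $x$-th chosen position must be larger than the entry in the $y$-th chosen position, and labels not involved in any relation are unconstrained. An $n$-permutation $\pi$ contains $p$ if there are indices $1\leq i_1<\cdots<i_k\leq n$ such that $\pi_{i_x}>\pi_{i_y}$ whenever $x>y$ in the partial order; otherwise $\pi$ avoids $p$. $S_n(p)$ denotes the set of $n$-permutations avoiding $p$. A permutation $\pi$ avoids a classical pattern $q$ if it has no subsequence order-isomorphic to $q$. *)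

From HB Require Import structures.
From mathcomp Require Import all_boot all_order all_algebra all_fingroup.
Set Implicit Arguments. Unset Strict Implicit. Unset Printing Implicit Defensive.
Import Order.TTheory GRing.Theory Num.Theory.

(* An n-permutation pi_1...pi_n is modelled as s : 'S_n = {perm 'I_n};
   position i (0-based) carries the value s i (0-based). Shifting positions
   and values by one does not affect any order relation. *)

Definition incr_pos (k n : nat) (f : {ffun 'I_k -> 'I_n}) : bool :=
  [forall a : 'I_k, forall b : 'I_k, (a < b)%N ==> (f a < f b)%N].

(* A POP of length k is given by a list of generating relations (x, y),
   1-based labels in {1..k}, each meaning "x > y". *)
Definition pop_contains (k : nat) (rels : seq (nat * nat)) (n : nat)
    (s : 'S_n) : bool :=
  [exists f : {ffun 'I_k -> 'I_n},
     incr_pos f &&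
     [forall a : 'I_k, forall b : 'I_k,
        ((a.+1, b.+1) \in rels) ==> (s (f b) < s (f a))%N]].

Definition pop_avoids k rels n (s : 'S_n) : bool := ~~ pop_contains k rels s.

(* Classical pattern q, given as a word (a permutation of 1..size q). *)
Definition pat_contains (q : seq nat) (n : nat) (s : 'S_n) : bool :=
  [exists f : {ffun 'I_(size q) -> 'I_n},
     incr_pos f &&
     [forall a : 'I_(size q), forall b : 'I_(size q),
        (s (f a) < s (f b))%N == (nth 0 q a < nth 0 q b)%N]].

Definition pat_avoids q n (s : 'S_n) : bool := ~~ pat_contains q s.

Definition popP : seq (nat * nat) := [:: (1, 2); (1, 3); (4, 3)].

Definition a_cnt (n : nat) : nat := #|[set s : 'S_n | pop_avoids 4 popP s]|.

From HB Require Import structures.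
From mathcomp Require Import all_boot all_order all_algebra all_fingroup.
From mathcomp Require Import zify ring.
Import Order.TTheory GRing.Theory Num.Theory.

Set Implicit Arguments. Unset Strict Implicit. Unset Printing Implicit Defensive.

(* Part (i): four distinct values satisfy the relations of p exactly when
   they are ordered as one of the five linear extensions 4312, 4213, 3214,
   4123, 3124 of p ([popP_linear_extensions]); a finite case analysis.

   Counting: a permutation is identified with its one-line word, and the
   words of 'S_n are the arrangements of [0, n) ([card_perm_words]).  Reading
   a word from the left, avoidance of p by w :: t reduces to avoidance by t
   under two extra constraints, recorded by bounds a and b
   ([avoids_after_cons]).  Counting by the rank of the first entry gives a
   recursion [nb_avoid] on the ranks of a and b ([count_avoids_after]),
   which is solved in closed form ([nb_avoid_closed]).  Hence
   a(n) = (3^n - 2n + 3)/4, from which the recurrence and the coefficients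
   of the generating function follow by algebra. *)

Lemma incr_posP k n (f : {ffun 'I_k -> 'I_n}) :
  reflect (forall a b : 'I_k, a < b -> f a < f b) (incr_pos f).
Proof.
apply: (iffP forallP) => [h a b|h a].
  by move/forallP: (h a) => /(_ b)/implyP.
by apply/forallP => b; apply/implyP; exact: h.
Qed.

Lemma incr_pos_inj k n (f : {ffun 'I_k -> 'I_n}) : incr_pos f -> injective f.
Proof.
move/incr_posP=> mono a b fab.
case: (ltngtP a b) => [ab|ba|/val_inj //];
  [have := mono _ _ ab | have := mono _ _ ba]; by rewrite fab ltnn.
Qed.

Notation i1 := (@Ordinal 4 0 isT).
Notation i2 := (@Ordinal 4 1 isT).
Notation i3 := (@Ordinal 4 2 isT).
Notation i4 := (@Ordinal 4 3 isT).

Lemma forall_ord4 (P : pred 'I_4) : [forall i, P i] = [&& P i1, P i2, P i3 & P i4].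
Proof.
apply/forallP/and4P => [h|[P1 P2 P3 P4] [[|[|[|[|i]]]] lt]]; first by split.
all: by rewrite ?(bool_irrelevance lt isT).
Qed.

Definition order_iso k (g : 'I_k -> nat) (q : seq nat) : bool :=
  [forall a, forall b, (g a < g b) == (nth 0 q a < nth 0 q b)].

Definition satisfies_popP (g : 'I_4 -> nat) : bool :=
  [forall a : 'I_4, forall b : 'I_4, ((a.+1, b.+1) \in popP) ==> (g b < g a)].

Definition popP_patterns (g : 'I_4 -> nat) : bool :=
  [|| order_iso g [:: 4; 3; 1; 2], order_iso g [:: 4; 2; 1; 3],
      order_iso g [:: 3; 2; 1; 4], order_iso g [:: 4; 1; 2; 3] |
      order_iso g [:: 3; 1; 2; 4]].

Lemma popP_linear_extensions (g : 'I_4 -> nat) : injective g ->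
  satisfies_popP g = popP_patterns g.
Proof.
move=> g_inj; have : uniq [:: g i1; g i2; g i3; g i4].
  by rewrite /= !inE !(inj_eq g_inj).
rewrite /satisfies_popP /popP_patterns /order_iso !forall_ord4 /=.
move: (g i1) (g i2) (g i3) (g i4) => a b c d.
rewrite !inE !negb_or => /and4P[/and3P[ab ac ad] /andP[bc bd] cd _].
case: (ltngtP a b) ab => // ? _; case: (ltngtP a c) ac => // ? _;
case: (ltngtP a d) ad => // ? _; case: (ltngtP b c) bc => // ? _;
case: (ltngtP b d) bd => // ? _; case: (ltngtP c d) cd => // ? _;
  by [] || lia.
Qed.

Lemma exists_andb_orr (T : finType) (P Q R : pred T) :
  [exists x, P x && (Q x || R x)] = [exists x, P x && Q x] || [exists x, P x && R x].
Proof.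
apply/existsP/orP => [[x /andP[Px /orP[Qx|Rx]]]|[]/existsP[x /andP[Px Hx]]].
- by left; apply/existsP; exists x; rewrite Px.
- by right; apply/existsP; exists x; rewrite Px.
all: by exists x; rewrite Px Hx ?orbT.
Qed.

Lemma pop_avoids_patterns n (s : 'S_n) :
  pop_avoids 4 popP s =
  [&& pat_avoids [:: 4; 3; 1; 2] s, pat_avoids [:: 4; 2; 1; 3] s,
      pat_avoids [:: 3; 2; 1; 4] s, pat_avoids [:: 4; 1; 2; 3] s &
      pat_avoids [:: 3; 1; 2; 4] s].
Proof.
rewrite /pop_avoids /pat_avoids -!negb_or; congr (~~ _).
have values_inj f : incr_pos f -> injective (fun a : 'I_4 => val (s (f a))).
  by move=> /incr_pos_inj f_inj a b /val_inj/perm_inj/f_inj.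
transitivity [exists f : {ffun 'I_4 -> 'I_n}, incr_pos f &&
  popP_patterns (fun a => s (f a))].
  apply: eq_existsb => f.
  by case: (boolP (incr_pos f)) => // /values_inj/popP_linear_extensions <-.
by rewrite /popP_patterns !exists_andb_orr.
Qed.

(* Occurrence predicates on words over nat, read left to right.
   [occ_tail2 x s]: s has positions k < l with s_k < x and s_k < s_l, i.e. the
   last two entries of an occurrence of p whose first entry has value x.
   [occ_tail3 x s]: s has positions j < k < l with s_j < x, s_k < x and
   s_k < s_l, the last three entries of such an occurrence.
   [occ_pop s]: s contains an occurrence of p. *)
Fixpoint occ_tail2 (x : nat) (s : seq nat) : bool :=
  if s is y :: s' then ((y < x) && has (fun z => y < z) s') || occ_tail2 x s'
  else false.

Fixpoint occ_tail3 (x : nat) (s : seq nat) : bool :=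
  if s is y :: s' then ((y < x) && occ_tail2 x s') || occ_tail3 x s' else false.

Fixpoint occ_pop (s : seq nat) : bool :=
  if s is y :: s' then occ_tail3 y s' || occ_pop s' else false.

Lemma occ_tail2_mono x x' s : x <= x' -> occ_tail2 x s -> occ_tail2 x' s.
Proof.
move=> le_xx'; elim: s => //= y s IH /orP[/andP[yx asc]|h]; apply/orP.
  by left; rewrite asc andbT (leq_trans yx le_xx').
by right; exact: IH.
Qed.

Lemma occ_tail3_mono x x' s : x <= x' -> occ_tail3 x s -> occ_tail3 x' s.
Proof.
move=> le_xx'; elim: s => //= y s IH /orP[/andP[yx h2]|h]; apply/orP.
  by left; rewrite (occ_tail2_mono le_xx' h2) andbT (leq_trans yx le_xx').
by right; exact: IH.
Qed.

Lemma occ_tail3_tail2 x s : occ_tail3 x s -> occ_tail2 x s.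
Proof.
elim: s => //= y s IH /orP[/andP[_ h]|h]; apply/orP; right => //; exact: IH.
Qed.

Lemma occ_tail2_max a b s :
  occ_tail2 (maxn a b) s = occ_tail2 a s || occ_tail2 b s.
Proof.
case: (leqP a b) => [ab|/ltnW ba].
  by apply/idP/orP => [|[/(occ_tail2_mono ab)|]] //; right.
by apply/idP/orP => [|[|/(occ_tail2_mono ba)]] //; left.
Qed.

Lemma occ_tail2_0 s : occ_tail2 0 s = false. Proof. by elim: s. Qed.
Lemma occ_tail3_0 s : occ_tail3 0 s = false. Proof. by elim: s. Qed.

Lemma occ_tail2P x t :
  reflect (exists k l, [/\ k < l < size t, nth 0 t k < x & nth 0 t k < nth 0 t l])
          (occ_tail2 x t).
Proof.
apply: (iffP idP).
  elim: t => //= y s IH /orP[/andP[yx /(has_nthP 0)[l lt hl]]|/IH[k [l [kl h1 h2]]]].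
    by exists 0, l.+1; split.
  by exists k.+1, l.+1; split.
elim: t => [|y s IH] [k [l [kl h1 h2]]] /=; first by move: kl; rewrite ltn0 andbF.
case: k kl h1 h2 => [|k] kl h1 h2; case: l kl h2 => // l kl h2; apply/orP.
  by left; rewrite h1 /=; apply/(has_nthP 0); exists l.
by right; apply: IH; exists k, l.
Qed.

Lemma occ_tail3P x t :
  reflect (exists j k l, [/\ j < k < l, l < size t, nth 0 t j < x,
                           nth 0 t k < x & nth 0 t k < nth 0 t l])
          (occ_tail3 x t).
Proof.
apply: (iffP idP).
  elim: t => //= y s IH /orP[/andP[yx /occ_tail2P[k [l [kl h1 h2]]]]|
                              /IH[j [k [l [jkl ls h0 h1 h2]]]]].
    by exists 0, k.+1, l.+1; split => //; case/andP: kl.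
  by exists j.+1, k.+1, l.+1; split => //; rewrite !ltnS.
elim: t => [|y s IH] [j [k [l [jkl ls h0 h1 h2]]]] /=; first by move: ls; rewrite ltn0.
case: j jkl h0 => [|j] jkl h0.
  case: k jkl h1 h2 => // k; case: l ls => // l ls jkl h1 h2.
  apply/orP; left; rewrite h0 /=; apply/occ_tail2P; exists k, l.
  by split => //; move: jkl ls; rewrite /= !ltnS; lia.
case: k jkl h1 h2 => [|k]; first by case/andP; rewrite ltn0.
case: l ls => [|l]; first by move=> _ /andP[_]; rewrite ltn0.
by move=> ls jkl h1 h2; apply/orP; right; apply: IH; exists j, k, l.
Qed.

Lemma occ_popP t :
  reflect (exists i j k l, [/\ i < j < k, k < l < size t, nth 0 t j < nth 0 t i,
                             nth 0 t k < nth 0 t i & nth 0 t k < nth 0 t l])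
          (occ_pop t).
Proof.
apply: (iffP idP).
  elim: t => //= y s IH /orP[/occ_tail3P[j [k [l [jkl ls h0 h1 h2]]]]|
                             /IH[i [j [k [l [ijk kl h0 h1 h2]]]]]].
    by exists 0, j.+1, k.+1, l.+1; split => //; move: jkl ls => /=; lia.
  by exists i.+1, j.+1, k.+1, l.+1; split.
elim: t => [|y s IH] [i [j [k [l [ijk kl h0 h1 h2]]]]] /=; first by move: kl => /=; lia.
have [j' ej] : exists j', j = j'.+1 by exists j.-1; lia.
have [k' ek] : exists k', k = k'.+1 by exists k.-1; lia.
have [l' el] : exists l', l = l'.+1 by exists l.-1; lia.
subst j k l; case: i ijk h0 h1 => [|i] ijk h0 h1 /=; apply/orP.
  by left; apply/occ_tail3P; exists j', k', l'; split => //; move: ijk kl => /=; lia.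
by right; apply: IH; exists i, j', k', l'; split => //; move: ijk kl => /=; lia.
Qed.

Definition word n (s : 'S_n) : seq nat := [seq val (s i) | i <- enum 'I_n].

Lemma size_word n (s : 'S_n) : size (word s) = n.
Proof. by rewrite size_map size_enum_ord. Qed.

Lemma nth_word n (s : 'S_n) (i : 'I_n) : nth 0 (word s) i = s i.
Proof.
rewrite (nth_map i) ?size_enum_ord //; congr (val (s _)).
by apply: val_inj; rewrite /= nth_enum_ord.
Qed.

Lemma occ_pop_word n (s : 'S_n) : pop_contains 4 popP s -> occ_pop (word s).
Proof.
case/existsP => f /andP[/incr_posP f_mono /forallP rel].
have R (a b : 'I_4) : ((a : nat).+1, (b : nat).+1) \in popP -> s (f b) < s (f a).
  by move=> h; move/forallP: (rel a) => /(_ b)/implyP; apply.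
apply/occ_popP; exists (f i1), (f i2), (f i3), (f i4); rewrite size_word !nth_word.
by split; rewrite ?f_mono ?ltn_ord //; apply: R.
Qed.

Lemma pop_contains_word n (s : 'S_n) : occ_pop (word s) -> pop_contains 4 popP s.
Proof.
case/occ_popP => [i [j [k [l [/andP[ij jk] /andP[kl ln] h0 h1 h2]]]]].
rewrite size_word in ln.
have [hi hj hk] : [/\ i < n, j < n & k < n] by split; lia.
pose oi := Ordinal hi; pose oj := Ordinal hj; pose ok := Ordinal hk.
pose ol := Ordinal ln.
rewrite -[i]/(val oi) -[j]/(val oj) -[k]/(val ok) -[l]/(val ol) !nth_word in h0 h1 h2.
apply/existsP; exists [ffun a : 'I_4 => nth oi [:: oi; oj; ok; ol] a].
apply/andP; split; apply/forallP => a; apply/forallP => b; rewrite !ffunE.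
  by case: a => [[|[|[|[|a]]]] ha] //; case: b => [[|[|[|[|b]]]] hb] //=; lia.
by case: a => [[|[|[|[|a]]]] ha] //; case: b => [[|[|[|[|b]]]] hb].
Qed.

Lemma word_inj n : injective (@word n).
Proof.
move=> s1 s2 e; apply/permP => i; apply: val_inj.
by have := congr1 (fun w => nth 0 w i) e; rewrite /= !nth_word.
Qed.

Lemma word_perm_eq n (s : 'S_n) : perm_eq (word s) (iota 0 n).
Proof.
apply: uniq_perm; first by rewrite map_inj_uniq ?enum_uniq // => a b /val_inj/perm_inj.
  exact: iota_uniq.
move=> x; rewrite mem_iota add0n /=; apply/mapP/idP => [[i _ ->]|xn].
  exact: ltn_ord.
by exists ((s^-1)%g (Ordinal xn)); rewrite ?mem_enum ?permKV.
Qed.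

Lemma word_surj n t : perm_eq t (iota 0 n) -> exists s : 'S_n, word s = t.
Proof.
move=> pe; have ut : uniq t by rewrite (perm_uniq pe) iota_uniq.
have st : size t = n by rewrite (perm_size pe) size_iota.
have t_lt (i : 'I_n) : nth 0 t i < n.
  have : nth 0 t i \in t by rewrite mem_nth // st.
  by rewrite (perm_mem pe) mem_iota.
pose g (i : 'I_n) : 'I_n := Ordinal (t_lt i).
have g_inj : injective g.
  move=> a b /(congr1 val) /= e; apply: val_inj.
  by apply/eqP; rewrite -(nth_uniq 0 _ _ ut) ?st ?ltn_ord // e.
exists (perm g_inj); apply: (@eq_from_nth _ 0); first by rewrite size_word st.
move=> i; rewrite size_word => ilt.
by rewrite (nth_word _ (Ordinal ilt)) permE.
Qed.

Fixpoint arrangements (k : nat) (S : seq nat) : seq (seq nat) :=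
  if k is k'.+1 then [seq w :: t | w <- S, t <- arrangements k' (rem w S)]
  else [:: [::]].

Lemma count_arrangements P k S :
  count P (arrangements k.+1 S) =
  \sum_(w <- S) count (fun t => P (w :: t)) (arrangements k (rem w S)).
Proof.
rewrite /= /allpairs_dep count_flatten -map_comp sumnE big_map.
by apply: eq_bigr => w _ /=; rewrite count_map.
Qed.

Lemma mem_arrangements k S t :
  uniq S -> size S = k -> (t \in arrangements k S) = perm_eq t S.
Proof.
elim: k S t => [|k IH] S t uS sS.
  case: S uS sS => // _ _; rewrite /= inE.
  by case: t => [|x t] //; apply/esym/negP => /perm_size.
have IHrem w : w \in S -> forall t', (t' \in arrangements k (rem w S)) = perm_eq t' (rem w S).
  by move=> wS t'; rewrite IH ?rem_uniq // size_rem // sS.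
apply/idP/idP.
  move=> /allpairsPdep[w [t' [wS t'in ->]]].
  by rewrite (permPr (perm_to_rem wS)) perm_cons -IHrem.
case: t => [|w t'] pe; first by have := perm_size pe; rewrite sS.
have wS : w \in S by rewrite -(perm_mem pe) inE eqxx.
apply/allpairsPdep; exists w, t'; split => //.
by rewrite IHrem // -(perm_cons w) -(permPr (perm_to_rem wS)).
Qed.

Lemma uniq_arrangements k S : uniq S -> uniq (arrangements k S).
Proof.
elim: k S => [|k IH] S uS //=.
apply: allpairs_uniq_dep => // [w wS|]; first exact/IH/rem_uniq.
by move=> [a b] [c d] _ _ /= [-> ->].
Qed.

Lemma card_perm_words n (P : pred (seq nat)) :
  #|[set s : 'S_n | P (word s)]| = count P (arrangements n (iota 0 n)).
Proof.
have pe : perm_eq (map (@word n) (enum 'S_n)) (arrangements n (iota 0 n)).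
  apply: uniq_perm.
  - by rewrite map_inj_uniq ?enum_uniq //; exact: word_inj.
  - exact/uniq_arrangements/iota_uniq.
  move=> t; rewrite mem_arrangements ?iota_uniq ?size_iota //.
  apply/mapP/idP => [[s _ ->]|/word_surj[s <-]]; first exact: word_perm_eq.
  by exists s; rewrite ?mem_enum.
rewrite -(seq.permP pe) count_map cardsE cardE /enum_mem size_filter.
by rewrite filter_predT; apply: eq_count => x; rewrite !inE.
Qed.

Definition rank_in (S : seq nat) (a : nat) : nat := count (fun x => x < a) S.

Lemma rank_in0 S : rank_in S 0 = 0. Proof. by elim: S. Qed.

Lemma rank_in_mono S a b : a <= b -> rank_in S a <= rank_in S b.
Proof. by move=> ab; apply: sub_count => x /= xa; exact: leq_trans xa ab. Qed.

Lemma rank_in_max S a b : rank_in S (maxn a b) = maxn (rank_in S a) (rank_in S b).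
Proof.
by case: (leqP a b) => [ab|/ltnW ba]; apply/esym;
  [apply/maxn_idPr | apply/maxn_idPl]; exact: rank_in_mono.
Qed.

Lemma rank_in_rem S w x : w \in S -> rank_in S x = (w < x) + rank_in (rem w S) x.
Proof. by move=> wS; rewrite /rank_in (seq.permP (perm_to_rem wS)). Qed.

Lemma rank_in_remE S w x : w \in S -> rank_in (rem w S) x = rank_in S x - (w < x).
Proof. by move=> wS; rewrite (rank_in_rem x wS) addKn. Qed.

Lemma rank_in_lt S w a : w \in S -> (w < a) = (rank_in S w < rank_in S a).
Proof.
move=> wS; case: (ltnP w a) => wa; last first.
  by apply/esym/negbTE; rewrite -leqNgt; exact: rank_in_mono.
rewrite (rank_in_rem a wS) (rank_in_rem w wS) wa ltnn add1n ltnS.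
by apply/esym/rank_in_mono/ltnW.
Qed.

Lemma rank_in_not_max S w : uniq S -> w \in S ->
  has (fun z => w < z) (rem w S) = (rank_in S w < (size S).-1).
Proof.
move=> uS wS; rewrite (rank_in_rem w wS) ltnn add0n -(size_rem wS).
have -> : rank_in (rem w S) w = count (fun z => z <= w) (rem w S).
  apply: eq_in_count => z; rewrite (mem_rem_uniq _ uS) inE => /andP[/negbTE zw _].
  by rewrite /= [z <= w]leq_eqVlt zw.
rewrite has_count -(count_predC (fun z => z <= w) (rem w S)).
have -> : count (predC (fun z => z <= w)) (rem w S) = count (fun z => w < z) (rem w S).
  by apply: eq_count => z /=; rewrite ltnNge.
lia.
Qed.

Lemma sum_rank_sorted (F : nat -> nat) s : sorted ltn s ->
  \sum_(w <- s) F (rank_in s w) = \sum_(r < size s) F r.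
Proof.
elim: s F => [|x s IH] F srt; first by rewrite big_nil big_ord0.
have x_min : all (fun y => x < y) s.
  by move: srt; rewrite /= (path_sortedE ltn_trans) => /andP[].
have rank_x : rank_in (x :: s) x = 0.
  rewrite /rank_in /= ltnn add0n; apply/eqP; rewrite -leqn0 leqNgt -has_count.
  by apply/hasPn => y ys; rewrite -leqNgt ltnW // (allP x_min).
rewrite big_cons big_ord_recl rank_x; congr (_ + _).
rewrite -(IH (fun r => F r.+1) (path_sorted srt)).
by apply: eq_big_seq => y ys; rewrite /rank_in /= (allP x_min).
Qed.

Lemma sum_rank (F : nat -> nat) S : uniq S ->
  \sum_(w <- S) F (rank_in S w) = \sum_(r < size S) F r.
Proof.
move=> uS; have pe : perm_eq (sort leq S) S := permEl (perm_sort _ _).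
have rankE : rank_in S =1 rank_in (sort leq S).
  by move=> a; rewrite /rank_in (seq.permP pe).
rewrite -(perm_big _ pe) /= -(perm_size pe).
under eq_bigr do rewrite rankE.
apply: sum_rank_sorted.
by rewrite ltn_sorted_uniq_leq sort_uniq uS sort_sorted //; exact: leq_total.
Qed.

(* [avoids_after a b t]: t avoids p, and still does so when preceded by an
   entry of value a (which may play the role 1 of p) and by two entries
   (roles 1 and 2) whose role-1 entry has value b. *)
Definition avoids_after (a b : nat) (t : seq nat) : bool :=
  ~~ occ_pop t && ~~ occ_tail3 a t && ~~ occ_tail2 b t.

Lemma avoids_after00 t : avoids_after 0 0 t = ~~ occ_pop t.
Proof. by rewrite /avoids_after occ_tail3_0 occ_tail2_0 !andbT. Qed.

(* Peeling the first entry w: if w < b it must be a maximum of the rest;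
   if w < a it becomes a role-2 entry for the role-1 bound max a b;
   otherwise w itself becomes the new role-1 candidate. *)
Lemma avoids_after_cons a b w t :
  avoids_after a b (w :: t) = ~~ ((w < b) && has (fun z => w < z) t) &&
    (if w < a then avoids_after 0 (maxn a b) t else avoids_after w b t).
Proof.
rewrite /avoids_after /= occ_tail2_max occ_tail3_0.
set c := (w < b) && _.
case: (ltnP w a) => wa /=.
  case h2a: (occ_tail2 a t); first by rewrite /= !andbF.
  have h3w : occ_tail3 w t = false.
    by apply/negP => /occ_tail3_tail2/(occ_tail2_mono (ltnW wa)); rewrite h2a.
  have h3a : occ_tail3 a t = false by apply/negP => /occ_tail3_tail2; rewrite h2a.
  rewrite h3w h3a /=.
  by case: c; case: (occ_pop t); case: (occ_tail2 b t).
case h3w: (occ_tail3 w t) => /=; first by rewrite !andbF.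
have -> : occ_tail3 a t = false by apply/negP => /(occ_tail3_mono wa); rewrite h3w.
by case: c; case: (occ_pop t); case: (occ_tail2 b t).
Qed.

(* [nb_avoid n al be] counts the arrangements t of an n-set S with
   [avoids_after a b t], where al and be are the ranks of a and b in S;
   its recursion follows [avoids_after_cons], summing over the rank r of
   the first entry. *)
Fixpoint nb_avoid (n al be : nat) : nat :=
  if n is m.+1 then
    \sum_(r < n) (if (r < be) && (r < m) then 0
                  else if r < al then nb_avoid m 0 (maxn al be).-1
                  else nb_avoid m r (be - (r < be)))
  else 1.

Lemma count_andl (T : Type) (c : bool) (Q : pred T) s :
  count (fun t => c && Q t) s = c * count Q s.
Proof. by case: c => /=; [rewrite mul1n | rewrite mul0n; elim: s]. Qed.

Lemma count_avoids_after k S a b : uniq S -> size S = k ->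
  count (avoids_after a b) (arrangements k S) =
  nb_avoid k (rank_in S a) (rank_in S b).
Proof.
elim: k S a b => [|k IH] S a b uS sS; first by case: S uS sS.
pose F r := if (r < rank_in S b) && (r < k) then 0
  else if r < rank_in S a then nb_avoid k 0 (maxn (rank_in S a) (rank_in S b)).-1
  else nb_avoid k r (rank_in S b - (r < rank_in S b)).
rewrite count_arrangements (_ : nb_avoid _ _ _ = \sum_(r < size S) F r) ?sS //.
rewrite -sS -(sum_rank F uS).
apply: eq_big_seq => w wS.
have [uS' sS'] : uniq (rem w S) /\ size (rem w S) = k.
  by rewrite rem_uniq // size_rem // sS.
transitivity (count (fun t => ~~ ((w < b) && has (fun z => w < z) (rem w S)) &&
    (if w < a then avoids_after 0 (maxn a b) t else avoids_after w b t))
    (arrangements k (rem w S))).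
  apply: eq_in_count => t; rewrite mem_arrangements // => tS /=.
  by rewrite avoids_after_cons (perm_has _ tS).
rewrite count_andl (rank_in_not_max uS wS) sS /= (rank_in_lt b wS) (rank_in_lt a wS) /F.
case: ifP => _; first by rewrite mul0n.
rewrite mul1n; case: ifP => wa; rewrite IH // !rank_in_remE // ?rank_in0 ?rank_in_max.
  by rewrite -(rank_in_lt a wS) in wa; rewrite leq_max wa subn1.
by rewrite ltnn subn0 (rank_in_lt b wS).
Qed.

Local Open Scope ring_scope.

(* Closed forms: [closedA n] is the claimed value (3^n - 2n + 3)/4 of a(n),
   and [closedH n al] is the value of [nb_avoid] with al the rank of the
   role-1 bound a and no role-2 constraint (be = 0). *)
Definition closedA (k : nat) : rat := (3 ^+ k - 2 * k%:R + 3) / 4.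
Definition closedB (k : nat) : rat := (3 ^+ k.-1 + 1) / 2.
Definition closedH (n al : nat) : rat :=
  if al == 0%N then closedA n
  else closedA (n - al).+1 + (al.-1)%:R * closedB (n - al).+1.

Lemma closedA0 : closedA 0 = 1. Proof. by rewrite /closedA expr0; field. Qed.
Lemma closedA1 : closedA 1 = 1. Proof. by rewrite /closedA expr1; field. Qed.
Lemma closedB1 : closedB 1 = 1. Proof. by rewrite /closedB expr0; field. Qed.

Lemma closedA_rec k : closedA k.+2 = 4 * closedA k.+1 - 3 * closedA k + 1.
Proof. by rewrite /closedA !exprS -!natr1; field. Qed.

Lemma closedH_step (a j : nat) :
  closedA j.+2 + a%:R * closedB j.+2 - a.+1%:R * closedA j.+1 =
  closedA j.+1 + a.+1%:R * closedB j.+1 - a.+2%:R * closedA j +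
  (closedA j.+1 + a%:R * closedB j.+1).
Proof. by rewrite /closedA /closedB /= !exprS -!natr1; field. Qed.

Lemma sum_lt_indicator (n al : nat) (X : rat) :
  \sum_(r < n) (if (r < al)%N then X else 0) = (minn al n)%:R * X.
Proof.
elim: n => [|n IH]; first by rewrite big_ord0 minn0 mul0r.
rewrite big_ord_recr /= IH.
have -> : minn al n.+1 = (minn al n + (n < al))%N by case: (ltnP n al) => h; lia.
by rewrite natrD mulrDl; case: (n < al)%N; rewrite ?mul1r ?mul0r ?addr0.
Qed.

Lemma sum_from_step n al (Y : nat -> rat) : (al < n)%N ->
  \sum_(r < n) (if (r < al)%N then 0 else Y r) =
  \sum_(r < n) (if (r < al.+1)%N then 0 else Y r) + Y al.
Proof.
move=> al_n; rewrite (bigD1 (Ordinal al_n)) // [in RHS](bigD1 (Ordinal al_n)) //=.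
rewrite ltnn ltnSn add0r addrC; congr (_ + _); apply: eq_bigr => r /eqP r_al.
have r_al' : (r : nat) != al by apply/eqP => e; apply: r_al; exact: val_inj.
by rewrite ltnS [(r <= al)%N]leq_eqVlt (negbTE r_al').
Qed.

Lemma sum_closedH_from m al : (al <= m.+1)%N ->
  \sum_(r < m.+1) (if (r < al)%N then 0 else closedH m r) =
  closedH m.+1 al - al%:R * closedA (m.+1 - al).
Proof.
move=> al_m; have [d e] : exists d, (al + d = m.+1)%N by exists (m.+1 - al)%N; lia.
elim: d al e {al_m} => [|d IH] al e.
  rewrite addn0 in e; subst al; rewrite big1 => [|r _]; last by rewrite ltn_ord.
  by rewrite subnn closedA0 /closedH /= subnn closedA1 closedB1 -natr1; ring.
have al_m : (al < m.+1)%N by lia.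
rewrite (sum_from_step _ al_m) (IH al.+1); last by lia.
case: al e al_m => [|a] e al_m; first by rewrite /closedH /= !subn0 subn1; ring.
rewrite /closedH /=.
have [-> -> ->] : [/\ (m.+1 - a.+1 = d.+1)%N, (m.+1 - a.+2 = d)%N & (m - a.+1 = d)%N].
  by split; lia.
by have := closedH_step a d; rewrite -natr1 => ->; rewrite -natr1; ring.
Qed.

Lemma closedH_rec m al : (al <= m.+1)%N ->
  \sum_(r < m.+1) (if (r < al)%N then closedH (m.+1 - al) 0 else closedH m r) =
  closedH m.+1 al.
Proof.
move=> al_m.
rewrite (eq_bigr (fun r : 'I_m.+1 => (if (r < al)%N then closedH (m.+1 - al) 0 else 0) +
   (if (r < al)%N then 0 else closedH m r))); last first.
  by move=> r _; case: ifP; rewrite ?addr0 ?add0r.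
rewrite big_split /= sum_lt_indicator sum_closedH_from //.
have -> : minn al m.+1 = al by lia.
by rewrite /closedH /=; ring.
Qed.

Lemma nb_avoid_closed n al be : (al <= n)%N -> (be <= n)%N ->
  (nb_avoid n al be)%:R = closedH (n - be) (al - be).
Proof.
elim: n al be => [|m IH] al be al_n be_n.
  by have [-> ->] : al = 0%N /\ be = 0%N by lia.
pose G (r : nat) := if (r < be)%N && (r < m)%N then 0
  else if (r < al)%N then closedH (m - (maxn al be).-1) (0 - (maxn al be).-1)
  else closedH (m - (be - (r < be))) (r - (be - (r < be))).
have -> : (nb_avoid m.+1 al be)%:R = \sum_(0 <= r < m.+1) G r.
  rewrite /= natr_sum big_mkord; apply: eq_bigr => r _; rewrite /G.
  by have := ltn_ord r; case: ifP => _ //; case: ifP => _ ? ; rewrite IH //; lia.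
case: (ltnP m be) => be_m.
  (* be = m + 1: only the last entry may come first, leaving one arrangement. *)
  rewrite big_nat_recr //= big1_seq ?add0r => [|r]; last first.
    by rewrite mem_index_iota /G => /and3P[_ _ r_m]; rewrite r_m (ltn_trans r_m be_m).
  rewrite /G ltnn andbF; have -> : be = m.+1 by lia.
  have -> : (al - m.+1 = 0)%N by lia.
  have -> : ((maxn al m.+1).-1 = m)%N by clear G; lia.
  by rewrite ltnSn subn1 /= !subnn; case: ifP.
(* be <= m: the first be ranks are forbidden; the others follow [closedH_rec]. *)
rewrite (@big_cat_nat _ _ _ be _ _ _ _ (leq0n be) (leqW be_m)) /=.
rewrite big1_seq ?add0r => [|r]; last first.
  by rewrite mem_index_iota /G => /and3P[_ _ r_be]; rewrite r_be (leq_trans r_be be_m).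
rewrite -{1}(add0n be) big_addn (_ : m.+1 - be = (m - be).+1)%N; last by lia.
rewrite big_mkord -closedH_rec; last by lia.
apply: eq_bigr => r _; have r_lt := ltn_ord r.
rewrite /G (_ : (r + be < be)%N = false) /=; last by lia.
case: (ltnP (r + be) al) => r_al.
  by rewrite (_ : (r < al - be)%N); [congr closedH; lia | lia].
by rewrite (_ : (r < al - be)%N = false) ?subn0 ?addnK //; lia.
Qed.

Lemma a_cnt_closed n : (a_cnt n)%:R = closedA n.
Proof.
rewrite /a_cnt; have -> : [set s : 'S_n | pop_avoids 4 popP s] =
          [set s : 'S_n | avoids_after 0 0 (word s)].
  apply/setP => s; rewrite !inE avoids_after00 /pop_avoids; congr (~~ _).
  by apply/idP/idP => [/occ_pop_word|/pop_contains_word].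
rewrite card_perm_words count_avoids_after ?iota_uniq ?size_iota //.
by rewrite !rank_in0 nb_avoid_closed // !subn0.
Qed.

Lemma a_cnt0 : a_cnt 0 = 1%N.
Proof. by apply/eqP; rewrite -(eqr_nat rat) a_cnt_closed closedA0. Qed.

Lemma a_cnt1 : a_cnt 1 = 1%N.
Proof. by apply/eqP; rewrite -(eqr_nat rat) a_cnt_closed closedA1. Qed.

Lemma a_cnt_rec m :
  (a_cnt m.+2)%:Z = 4 * (a_cnt m.+1)%:Z - 3 * (a_cnt m)%:Z + 1.
Proof.
suff : (a_cnt m.+2 + 3 * a_cnt m = 4 * a_cnt m.+1 + 1)%N by lia.
apply/eqP; rewrite -(eqr_nat rat) !natrD !a_cnt_closed closedA_rec.
by apply/eqP; ring.
Qed.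

Lemma denominator_expand :
  (1 - 3%:P * 'X) * (1 - 'X) ^+ 2 = 1 - 'X *+ 5 + 'X^2 *+ 7 - 'X^3 *+ 3 :> {poly int}.
Proof. by rewrite (_ : 3%:P = 3%:R) ?polyC_natr //; ring. Qed.

Lemma numerator_expand : (1 - 2%:P * 'X) ^+ 2 = 1 - 'X *+ 4 + 'X^2 *+ 4 :> {poly int}.
Proof. by rewrite (_ : 2%:P = 2%:R) ?polyC_natr //; ring. Qed.

(* Coefficientwise, (sum a(n) x^n) (1-3x)(1-x)^2 = (1-2x)^2: the coefficient
   of x^i is a(i) - 5a(i-1) + 7a(i-2) - 3a(i-3), which the recurrence
   makes vanish for i >= 3. *)
Lemma a_cnt_gf N i : (i < N)%N ->
  ((\sum_(j < N) (a_cnt j)%:Z *: 'X^j) * ((1 - 3%:P * 'X) * (1 - 'X) ^+ 2)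
     : {poly int})`_i = ((1 - 2%:P * 'X) ^+ 2 : {poly int})`_i.
Proof.
move=> i_N; set p := \sum_(j < N) _.
have pE k : (k < N)%N -> p`_k = (a_cnt k)%:Z.
  by move=> k_N; rewrite /p -(poly_def N (fun j => (a_cnt j)%:Z)) coef_poly k_N.
rewrite denominator_expand numerator_expand !mulrDr !mulrN mulr1 !mulrnAr.
rewrite !coefD !coefN !coefMn !coefMXn coefMX coef1 coefX !coefXn.
case: i i_N => [|[|[|i]]] i_N /=; rewrite ?subSS ?subn0 ?subnn !pE ?a_cnt0 ?a_cnt1 //;
  try lia.
- by rewrite (a_cnt_rec 0) a_cnt0 a_cnt1.
- by rewrite (a_cnt_rec i.+1) (a_cnt_rec i); ring.
Qed.

Theorem theorem3p11 :
  (* avoiding p = avoiding 4312, 4213, 3214, 4123, 3124 *)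
  (forall (n : nat) (s : 'S_n),
     pop_avoids 4 popP s =
     [&& pat_avoids [:: 4; 3; 1; 2]%N s, pat_avoids [:: 4; 2; 1; 3]%N s,
         pat_avoids [:: 3; 2; 1; 4]%N s, pat_avoids [:: 4; 1; 2; 3]%N s &
         pat_avoids [:: 3; 1; 2; 4]%N s]) /\
  (a_cnt 0 = 1%N /\ a_cnt 1 = 1%N) /\
  (forall n : nat, (2 <= n)%N ->
     (a_cnt n)%:Z = 4 * (a_cnt n.-1)%:Z - 3 * (a_cnt n.-2)%:Z + 1) /\
  (forall n : nat,
     (a_cnt n)%:R = ((3 ^+ n - 2 * n%:R + 3) / 4 : rat)) /\
  (* formal power series identity  sum a(n) x^n = (1-2x)^2 / ((1-3x)(1-x)^2),
     i.e. (sum a(n) x^n) * (1-3x)(1-x)^2 = (1-2x)^2, checked coefficientwise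
     via truncations *)
  (forall N i : nat, (i < N)%N ->
     ((\sum_(j < N) (a_cnt j)%:Z *: 'X^j) *
        ((1 - 3%:P * 'X) * (1 - 'X) ^+ 2) : {poly int})`_i
     = ((1 - 2%:P * 'X) ^+ 2 : {poly int})`_i).
Proof.
split; first exact: pop_avoids_patterns.
split; first by rewrite a_cnt0 a_cnt1.
split; first by case=> [|[|m]] // _; exact: a_cnt_rec.
split; first exact: a_cnt_closed.
exact: a_cnt_gf.
Qed.
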